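(* Let $x,u,v\in\mathbb{R}^N$ with $|u|=|v|=r>0$. Assume that $B_r(x+u)\cap B_r(-x-v)=\emptyset$ and $B_r(x-u)\cap B_r(-x+v)=\emptyset$. Then $|u-v|\le 2|x|$.
   Context: $B_r(y)$ denotes the open Euclidean ball of radius $r$ centered at $y$. *)

(* R^N is 'rV[R]_N over an abstract real closed field R
   (the reals are an instance). *)
From mathcomp Require Import all_boot all_order all_algebra.
Set Implicit Arguments. Unset Strict Implicit. Unset Printing Implicit Defensive.
Import Order.TTheory GRing.Theory Num.Theory.
Local Open Scope ring_scope.

Definition enorm (R : rcfType) (N : nat) (v : 'rV[R]_N) : R :=
  Num.sqrt (\sum_(i < N) v 0 i ^+ 2).

Definition oball (R : rcfType) (N : nat) (y : 'rV[R]_N) (r : R) : pred 'rV[R]_N :=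
  fun z => enorm (z - y) < r.

(* Two disjoint open balls of radius r have centres at distance at least 2r
   (otherwise their midpoint lies in both).  Applied to the two pairs of balls,
   |2x + (u + v)| >= 2r and |2x - (u + v)| >= 2r; the parallelogram law turns the
   sum of their squares into 8|x|^2 + 2|u + v|^2, and once more into
   8|x|^2 + 8r^2 - 2|u - v|^2, whence |u - v|^2 <= 4|x|^2. *)
From mathcomp Require Import all_boot all_order all_algebra.
From mathcomp Require Import ring lra.
Import Order.TTheory GRing.Theory Num.Theory.
Local Open Scope ring_scope.

Section EuclideanNorm.
Context {R : rcfType} {N : nat}.
Implicit Types (a b v : 'rV[R]_N) (k r : R).

Lemma enorm_ge0 v : 0 <= enorm v.
Proof. exact: sqrtr_ge0. Qed.

Lemma sqr_enorm v : enorm v ^+ 2 = \sum_(i < N) v 0 i ^+ 2.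
Proof. by rewrite sqr_sqrtr // sumr_ge0 // => i _; rewrite sqr_ge0. Qed.

Lemma enormZ k v : enorm (k *: v) = `|k| * enorm v.
Proof.
rewrite /enorm -sqrtr_sqr -sqrtrM ?sqr_ge0 // mulr_sumr.
by congr Num.sqrt; apply: eq_bigr => i _; rewrite mxE exprMn.
Qed.

Lemma enormN v : enorm (- v) = enorm v.
Proof. by rewrite -scaleN1r enormZ normrN1 mul1r. Qed.

Lemma enorm_parallelogram a b :
  enorm (a + b) ^+ 2 + enorm (a - b) ^+ 2 = 2 * enorm a ^+ 2 + 2 * enorm b ^+ 2.
Proof.
rewrite !sqr_enorm !mulr_sumr -!big_split /=.
by apply: eq_bigr => i _; rewrite !mxE; ring.
Qed.

Lemma oball_disjoint_dist {a b r} :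
  (forall z, ~ (oball a r z /\ oball b r z)) -> 2 * r <= enorm (a - b).
Proof.
move=> disj; rewrite leNgt; apply/negP => close.
have mid_subl : 2^-1 *: (a + b) - a = 2^-1 *: (b - a).
  by apply/rowP => i; rewrite !mxE; field.
have mid_subr : 2^-1 *: (a + b) - b = - (2^-1 *: (b - a)).
  by apply/rowP => i; rewrite !mxE; field.
have half_dist : enorm (2^-1 *: (b - a)) = enorm (a - b) / 2.
  by rewrite enormZ -opprB enormN ger0_norm ?invr_ge0 // mulrC.
apply: (disj (2^-1 *: (a + b))).
by rewrite /oball mid_subl mid_subr enormN half_dist; split; lra.
Qed.

End EuclideanNorm.

Theorem lemma2p1 (R : rcfType) (N : nat) (x u v : 'rV[R]_N) (r : R) :
  0 < r -> enorm u = r -> enorm v = r ->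
  (forall z, ~ (oball (x + u) r z /\ oball (- x - v) r z)) ->
  (forall z, ~ (oball (x - u) r z /\ oball (- x + v) r z)) ->
  enorm (u - v) <= 2 * enorm x.
Proof.
move=> _ hu hv disj1 disj2.
have r_ge0 : 0 <= r by rewrite -hu enorm_ge0.
have sqr_dist_ge (a b : 'rV[R]_N) : 2 * r <= enorm (a - b) ->
    4 * r ^+ 2 <= enorm (a - b) ^+ 2.
  move=> le_ab; have -> : 4 * r ^+ 2 = (2 * r) ^+ 2 by ring.
  by rewrite ler_sqr ?nnegrE ?enorm_ge0 ?mulr_ge0.
have := sqr_dist_ge _ _ (oball_disjoint_dist disj1).
have := sqr_dist_ge _ _ (oball_disjoint_dist disj2).
have -> : x + u - (- x - v) = 2 *: x + (u + v).
  by apply/rowP => i; rewrite !mxE; ring.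
have -> : x - u - (- x + v) = 2 *: x - (u + v).
  by apply/rowP => i; rewrite !mxE; ring.
have := enorm_parallelogram (2 *: x) (u + v).
have := enorm_parallelogram u v.
rewrite enormZ ger0_norm // hu hv => uv_law x_law ge1 ge2.
by rewrite -ler_sqr ?nnegrE ?mulr_ge0 ?enorm_ge0 //; nra.
Qed.
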